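(* Let $f\in\mathcal{S}_d$ and $\sigma>0$. Then for every prime $p$ the series $\sum_{n=0}^\infty\frac{|D_f(n,p)|}{p^{n\sigma}}$ converges, and it is bounded independently of $p$.
   Context: $\mathcal{S}_d$ is the set of multiplicative functions $f=f_1*\cdots*f_d$ where each $f_i$ is completely multiplicative with $|f_i(n)|\le1$, and $(a*b)(n)=\sum_{dm=n}a(d)b(m)$. For a prime $p$ and integer $k\ge1$, $D_f(k,p)$ is the determinant of the $k\times k$ matrix $(a_{ij})$ with $a_{ij}=f(p^{i-j+1})$ if $i-j+1\ge0$ and $a_{ij}=0$ otherwise; $D_f(0,p)=1$. *)

From HB Require Import structures.
From mathcomp Require Import all_boot all_order all_algebra.
From mathcomp Require Import complex.
From mathcomp Require Import all_classical all_reals all_analysis.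
Set Implicit Arguments. Unset Strict Implicit. Unset Printing Implicit Defensive.
Import Order.TTheory GRing.Theory Num.Theory.
Local Open Scope ring_scope.

(* Arithmetic functions with complex values: maps nat -> R[i]; the value at 0
   is irrelevant. *)

Definition dconv (R : rcfType) (a b : nat -> R[i]) : nat -> R[i] :=
  fun n => \sum_(k < n.+1 | (0 < k)%N && (k %| n)%N) a k * b (n %/ k)%N.

Definition dunit (R : rcfType) : nat -> R[i] := fun n => (n == 1%N)%:R.

Definition completely_multiplicative (R : rcfType) (g : nat -> R[i]) : Prop :=
  g 1%N = 1 /\ forall m n, (0 < m)%N -> (0 < n)%N -> g (m * n)%N = g m * g n.

Definition in_S (R : rcfType) (d : nat) (f : nat -> R[i]) : Prop :=
  exists fs : 'I_d -> nat -> R[i],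
    (forall i, completely_multiplicative (fs i)) /\
    (forall i n, (0 < n)%N -> Normc.normc (fs i n) <= 1) /\
    (forall n, (0 < n)%N -> f n = (\big[@dconv R/@dunit R]_(i < d) fs i) n).

(* D_f(k,p) = det (a_ij)_{k x k}, a_ij = f(p^(i-j+1)) if i-j+1 >= 0, else 0.
   With 0-based indices i j : 'I_k, i - j + 1 >= 0 iff j <= i + 1, and the
   exponent is i + 1 - j. For k = 0 the determinant of the empty matrix is 1. *)
Definition Dmat (R : rcfType) (f : nat -> R[i]) (k p : nat) : 'M[R[i]]_k :=
  \matrix_(i < k, j < k) if (j <= i.+1)%N then f (p ^ (i.+1 - j))%N else 0.

Definition D (R : rcfType) (f : nat -> R[i]) (k p : nat) : R[i] :=
  \det (Dmat f k p).

From HB Require Import structures.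
From mathcomp Require Import all_boot all_order all_algebra.
From mathcomp Require Import complex.
From mathcomp Require Import all_classical all_reals all_analysis.
Import Order.TTheory GRing.Theory Num.Theory.
Import numFieldNormedType.Exports.
Local Open Scope ring_scope.
Set Implicit Arguments. Unset Strict Implicit. Unset Printing Implicit Defensive.

(* Write a_m = f(p^m). Since f = f_1 * ... * f_d with f_i completely multiplicative,
   sum_m a_m x^m = prod_i 1/(1 - f_i(p) x), and D_f(k, p) is the k-th coefficient of the
   reciprocal series up to the sign (-1)^k: an elementary symmetric polynomial of degree k
   in the f_i(p). Hence |D_f(k, p)| <= C(d, k), D_f(k, p) = 0 for k > d, and the series is
   a finite sum bounded by 2^d.  Instead of power series we peel off one factor at a time:
   if b is a with the factor 1/(1 - c x) removed, i.e. b_(m+1) = a_(m+1) - c a_m, then a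
   column operation gives D_a(k+1) = D_b(k+1) + c D_b(k), Pascal's rule for the bound. *)

Section HessenbergToeplitz.
Variable C : comNzRingType.
Implicit Types (a b : nat -> C) (c : C).

Definition hess_coef a (i j : nat) : C := if (j <= i.+1)%N then a (i.+1 - j)%N else 0.

Definition hess_mx a k : 'M[C]_k := \matrix_(i < k, j < k) hess_coef a i j.

Lemma hess_mx_minor a k :
  row' ord_max (col' ord_max (hess_mx a k.+1)) = hess_mx a k.
Proof.
by apply/matrixP => i j; rewrite !mxE /= /bump !(leqNgt k) !ltn_ord.
Qed.

Lemma det_hess_mx_unit a k : (forall m, a m.+1 = 0) -> \det (hess_mx a k.+1) = 0.
Proof.
move=> a_eq0; rewrite (expand_det_row _ ord_max) big1 // => j _.
rewrite mxE /hess_coef; case: ifP => _; last by rewrite mul0r.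
by rewrite /= subSn ?a_eq0 ?mul0r // -ltnS.
Qed.

Lemma det_add_scale_delta n (A : 'M[C]_n) c i :
  \det (A + c *: delta_mx i i) = \det A + c * cofactor A i i.
Proof.
have colE : col' i (A + c *: delta_mx i i) = col' i A.
  apply/matrixP => l j.
  by rewrite !mxE [lift _ _ == _]eq_sym (negbTE (neq_lift i j)) andbF mulr0 addr0.
rewrite (expand_det_col _ i) (expand_det_col A i) (bigD1 i) //= [in RHS](bigD1 i) //=.
rewrite !mxE !eqxx mulr1 /cofactor colE mulrDl addrAC -!addrA; congr (_ + (_ + _)).
by apply: eq_bigr => l /negbTE l_i; rewrite !mxE l_i mulr0 addr0.
Qed.

Definition shift_mx k : 'M[C]_k := \matrix_(l < k, j < k) ((l : nat) == j.+1)%:R.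

Lemma det_unipotent_shift k c : \det (1%:M - c *: shift_mx k) = 1.
Proof.
rewrite det_trig.
  by rewrite big1 // => i _; rewrite !mxE eqxx ltn_eqF // mulr0 subr0.
apply/is_trig_mxP => i j lt_ij.
by rewrite !mxE -val_eqE /= !ltn_eqF // 1?ltnW // mulr0 subr0.
Qed.

Lemma mulmx_shift_mx k (A : 'M[C]_k.+1) i (j : 'I_k.+1) :
  (A *m shift_mx k.+1) i j = if (j < k)%N then A i (inord j.+1) else 0.
Proof.
rewrite mxE; under eq_bigr do rewrite mxE.
case: ifP => lt_jk.
  rewrite (bigD1 (inord j.+1)) //= inordK // eqxx mulr1 big1 ?addr0 // => l l_j.
  by rewrite eqE /= inordK // in l_j; rewrite (negbTE l_j) mulr0.
rewrite big1 // => l _; case: eqP => [l_j|]; last by rewrite mulr0.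
by move: (ltn_ord l); rewrite l_j ltnS lt_jk.
Qed.

Lemma hess_coef_deflate a b c i j : b 0%N = a 0%N ->
  (forall m, b m.+1 = a m.+1 - c * a m) ->
  hess_coef b i j = hess_coef a i j - c * hess_coef a i j.+1.
Proof.
move=> b0 bS; rewrite /hess_coef ltnS.
case: (ltngtP j i.+1) => [lt_ji|lt_ij|->].
- by rewrite -ltnS lt_ji subSn // bS subSS.
- by rewrite (leqNgt j i) (ltnW lt_ij) mulr0 subr0.
- by rewrite subnn ltnn mulr0 subr0.
Qed.

(* Right multiplication by [1 - c * shift] subtracts [c] times column [j+1] from
   column [j]; only the last column, which has no successor, keeps a trace of [a]. *)
Lemma hess_mx_mul_unipotent_shift a b c k : a 0%N = 1 -> b 0%N = 1 ->
  (forall m, b m.+1 = a m.+1 - c * a m) ->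
  hess_mx a k.+1 *m (1%:M - c *: shift_mx k.+1)
    = hess_mx b k.+1 + c *: delta_mx ord_max ord_max.
Proof.
move=> a0 b0 bS; apply/matrixP => i j.
have := mulmx_shift_mx (hess_mx a k.+1) i j; rewrite [LHS]mxE => shiftE.
rewrite mulmxBr mulmx1 -scalemxAr !mxE shiftE.
rewrite (@hess_coef_deflate a b c i j (etrans b0 (esym a0)) bS).
case: ltnP => [lt_jk|le_kj].
  by rewrite mxE inordK // -[j == _]val_eqE /= ltn_eqF // andbF mulr0 addr0.
have -> : j = ord_max by apply/val_inj/anti_leq; rewrite le_kj -ltnS ltn_ord.
rewrite eqxx andbT /hess_coef /= ltnS mulr0 subr0.
case: eqP => [->|i_max]; first by rewrite leqnn subnn a0 mulr1 subrK.
have lt_ik : (i < k)%N.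
  by rewrite ltn_neqAle -ltnS ltn_ord andbT; apply/eqP => i_k; apply/i_max/val_inj.
by rewrite (leqNgt k i) lt_ik mulr0 subr0 addr0.
Qed.

Lemma det_hess_mx_deflate a b c k : a 0%N = 1 -> b 0%N = 1 ->
  (forall m, b m.+1 = a m.+1 - c * a m) ->
  \det (hess_mx a k.+1) = \det (hess_mx b k.+1) + c * \det (hess_mx b k).
Proof.
move=> a0 b0 bS; rewrite -[LHS]mulr1 -(det_unipotent_shift k.+1 c) -det_mulmx.
rewrite (hess_mx_mul_unipotent_shift k a0 b0 bS) det_add_scale_delta /cofactor hess_mx_minor.
by rewrite -signr_odd addnn odd_double expr0 mul1r.
Qed.

End HessenbergToeplitz.

Lemma sum_dvdn_pfactor (V : nmodType) (F : nat -> V) p m : prime p ->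
  \sum_(k < (p ^ m).+1 | (0 < k)%N && (k %| p ^ m)%N) F k = \sum_(t < m.+1) F (p ^ t)%N.
Proof.
move=> p_pr; have p_gt1 := prime_gt1 p_pr.
have lt_pow t : (t < m.+1)%N -> (p ^ t < (p ^ m).+1)%N by move=> ?; rewrite ltnS leq_exp2l.
rewrite (reindex_onto (fun t : 'I_m.+1 => inord (p ^ t) : 'I_(p ^ m).+1)
   (fun k : 'I_(p ^ m).+1 => inord (logn p k))) /=.
  apply: eq_big => t; last by move=> _; rewrite inordK ?lt_pow.
  rewrite inordK ?lt_pow // expn_gt0 prime_gt0 //= pfactorK // inord_val eqxx andbT.
  by rewrite dvdn_exp2l // -ltnS.
move=> k /andP[_ /(dvdn_pfactor _ _ p_pr)[e le_em k_eq]].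
by apply/val_inj; rewrite /= k_eq pfactorK // !inordK ?lt_pow ?ltnS.
Qed.

Section PrimePowerValues.
Variable R : rcfType.
Implicit Types (g h : nat -> R[i]).

Lemma cmult_expn h p e : (0 < p)%N -> completely_multiplicative h ->
  h (p ^ e)%N = h p ^+ e.
Proof.
move=> p_gt0 [h1 hM]; elim: e => [|e IH]; first by rewrite expn0 h1 expr0.
by rewrite expnS hM ?expn_gt0 ?p_gt0 // IH exprS.
Qed.

Lemma dconv_cmult_expn h g p m : prime p -> completely_multiplicative h ->
  dconv h g (p ^ m)%N = \sum_(t < m.+1) h p ^+ t * g (p ^ (m - t))%N.
Proof.
move=> p_pr h_cm; rewrite /dconv (sum_dvdn_pfactor (fun k => h k * g (p ^ m %/ k)%N)) //.
apply: eq_bigr => t _; rewrite (cmult_expn _ (prime_gt0 p_pr) h_cm) -expnB ?prime_gt0 //.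
by rewrite -ltnS ltn_ord.
Qed.

Lemma dconv_cmult_expnS h g p m : prime p -> completely_multiplicative h ->
  g (p ^ m.+1)%N = dconv h g (p ^ m.+1)%N - h p * dconv h g (p ^ m)%N.
Proof.
move=> p_pr h_cm; rewrite !dconv_cmult_expn // big_ord_recl expr0 mul1r subn0.
rewrite mulr_sumr; under [X in _ - X]eq_bigr do rewrite mulrA -exprS.
by rewrite addrK.
Qed.

Lemma dunit_expn p m : (1 < p)%N -> dunit R (p ^ m)%N = (m == 0)%N%:R.
Proof. by move=> p_gt1; rewrite /dunit -[X in (_ == X)%N](expn0 p) eqn_exp2l. Qed.

Lemma big_dconv_cmult_1 n (gs : 'I_n -> nat -> R[i]) :
  (forall i, completely_multiplicative (gs i)) ->
  (\big[@dconv R/@dunit R]_(i < n) gs i) 1%N = 1.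
Proof.
elim: n gs => [|n IH] gs gs_cm; first by rewrite big_ord0.
rewrite big_ord_recl (dconv_cmult_expn _ 0 (isT : prime 2)) // big_ord1.
by rewrite expr0 mul1r IH.
Qed.

End PrimePowerValues.

Lemma normc_ge0 (R : rcfType) (x : R[i]) : 0 <= Normc.normc x.
Proof. by case: x => a b; exact: sqrtr_ge0. Qed.

Lemma normc_det_hess_big_dconv (R : rcfType) n (gs : 'I_n -> nat -> R[i]) p k :
  prime p -> (forall i, completely_multiplicative (gs i)) ->
  (forall i, Normc.normc (gs i p) <= 1) ->
  Normc.normc (\det (hess_mx (fun m => (\big[@dconv R/@dunit R]_(i < n) gs i) (p ^ m)%N) k))
    <= 'C(n, k)%:R.
Proof.
move=> p_pr; elim: n gs k => [|n IH] gs k gs_cm gs_le1.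
  case: k => [|k]; first by rewrite det_mx00 Normc.normc1.
  rewrite det_hess_mx_unit ?Normc.normc0 // => m.
  by rewrite big_ord0 dunit_expn ?prime_gt1.
case: k => [|k]; first by rewrite det_mx00 Normc.normc1.
set B := fun m => (\big[@dconv R/@dunit R]_(i < n) gs (lift ord0 i)) (p ^ m)%N.
have B1 : B 0%N = 1 by apply: big_dconv_cmult_1 => i.
rewrite big_ord_recl (@det_hess_mx_deflate _ _ B (gs ord0 p)) //; first last.
- by move=> m; apply: dconv_cmult_expnS.
- by rewrite (dconv_cmult_expn _ 0) // big_ord1 expr0 mul1r.
have IHB j : Normc.normc (\det (hess_mx B j)) <= 'C(n, j)%:R.
  by apply: IH => i; [apply: gs_cm | apply: gs_le1].
rewrite binS natrD (le_trans (le_normcD _ _)) // Normc.normcM lerD //.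
by rewrite (le_trans _ (IHB k)) // ler_piMl ?normc_ge0.
Qed.

Lemma normc_D_le_binomial (R : rcfType) d (f : nat -> R[i]) p n :
  in_S d f -> prime p -> Normc.normc (D f n p) <= 'C(d, n)%:R.
Proof.
move=> [fs [fs_cm [fs_le1 f_eq]]] p_pr.
have -> : D f n p = \det (hess_mx (fun m => (\big[@dconv R/@dunit R]_(i < d) fs i) (p ^ m)%N) n).
  congr (\det _); apply/matrixP => i j; rewrite !mxE /hess_coef.
  by case: ifP => // _; rewrite f_eq // expn_gt0 prime_gt0.
apply: normc_det_hess_big_dconv => // i; apply: fs_le1; exact: prime_gt0.
Qed.

Lemma series_eventually_zero (R : realType) (u : R^nat) N :
  (forall n, (N < n)%N -> u n = 0) ->
  cvgn (series u) /\ limn (series u) = \sum_(n < N.+1) u n.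
Proof.
move=> u_eq0.
have series_cst : \forall n \near eventually, series u n = \sum_(n < N.+1) u n.
  exists N.+1 => // n /= le_Nn.
  rewrite /series /= (big_cat_nat _ le_Nn) //= big_mkord.
  rewrite [X in _ + X]big1_seq ?addr0 // => m /andP[_].
  by rewrite mem_index_iota => /andP[lt_Nm _]; apply: u_eq0.
split; first exact: is_cvg_near_cst series_cst.
by rewrite (lim_near_cst _ series_cst).
Qed.

Theorem lemma7 (R : realType) (d : nat) (f : nat -> R[i]) (sigma : R) :
  in_S d f -> 0 < sigma ->
  exists C : R, forall p : nat, prime p ->
    cvgn (@series R (fun n : nat => Normc.normc (D f n p) / (p%:R `^ (n%:R * sigma))))
    /\ limn (@series R (fun n : nat => Normc.normc (D f n p) / (p%:R `^ (n%:R * sigma)))) <= C.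
Proof.
move=> f_S sigma_gt0; exists (2 ^ d)%:R => p p_pr.
set u := fun n : nat => _.
have u_le n : u n <= 'C(d, n)%:R.
  have pow_ge1 : 1 <= p%:R `^ (n%:R * sigma) :> R.
    rewrite -[X in X <= _](powRr0 p%:R); apply: ler_powR; first by rewrite ler1n prime_gt0.
    by rewrite mulr_ge0 // ltW.
  rewrite (le_trans _ (normc_D_le_binomial n f_S p_pr)) // ler_piMr ?normc_ge0 //.
  by rewrite invf_le1 // (lt_le_trans ltr01).
have u_eq0 n : (d < n)%N -> u n = 0.
  move=> lt_dn; apply/eqP; rewrite eq_le divr_ge0 ?normc_ge0 ?powR_ge0 // andbT.
  by rewrite (le_trans (u_le n)) // bin_small.
have [u_cvg u_lim] := series_eventually_zero u_eq0.
split=> //; rewrite u_lim; apply: (le_trans (ler_sum _ (fun (n : 'I_d.+1) _ => u_le n))).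
rewrite -natr_sum ler_nat -[2%N]/(1 + 1)%N expnDn.
by under [X in (_ <= X)%N]eq_bigr do rewrite !exp1n !muln1.
Qed.
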